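(* For any integers $k_1<k_2$, the function $\sin:(k_1\pi,k_2\pi)\to\mathbb{R}$ is amenable.
   Context: Relative distance on $\mathbb{R}$: $\mathrm{dist}(x,y)=0$ if $x=y=0$, $\mathrm{dist}(x,y)=|\log(y/x)|$ if $xy>0$, and $\mathrm{dist}(x,y)=\infty$ otherwise. For a real analytic function $f$ on an open set $\Omega\subseteq\mathbb{R}$, not identically zero, the condition number is $\kappa(f,x)=0$ if $x=0$, $\kappa(f,x)=\infty$ if $x\neq0$ and $f(x)=0$, and $\kappa(f,x)=|x|\,|f'(x)|/|f(x)|$ otherwise; $\mu(f,x)=1+\kappa(f,x)$. $f:\Omega\to\mathbb{R}$ is amenable if there is $C>0$ such that for every $x\in\Omega$ with $\kappa(f,x)<\infty$, the set $B_x=\{y\in\mathbb{R}:\mathrm{dist}(y,x)<1/(C\mu(f,x))\}$ is contained in $\Omega$ and $\mu(f,y)\leq C\mu(f,x)$ for all $y\in B_x$. *)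

From Stdlib Require Import Reals.
From Coquelicot Require Import Coquelicot.
Open Scope R_scope.

Definition rel_dist (x y : R) : Rbar :=
  if Req_EM_T x 0 then
    (if Req_EM_T y 0 then Finite 0 else p_infty)
  else if Rlt_dec 0 (x * y) then Finite (Rabs (ln (y / x)))
  else p_infty.

Definition kappa (f : R -> R) (x : R) : Rbar :=
  if Req_EM_T x 0 then Finite 0
  else if Req_EM_T (f x) 0 then p_infty
  else Finite (Rabs x * Rabs (Derive f x) / Rabs (f x)).

Definition mu (f : R -> R) (x : R) : Rbar := Rbar_plus (Finite 1) (kappa f x).

Definition amenable (f : R -> R) (Omega : R -> Prop) : Prop :=
  exists C : R, 0 < C /\
    forall x : R, Omega x -> is_finite (kappa f x) ->
      forall y : R,
        Rbar_lt (rel_dist y x) (Finite (1 / (C * real (mu f x)))) ->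
        Omega y /\ Rbar_le (mu f y) (Rbar_mult (Finite C) (mu f x)).

(** Write [s = |sin x|] and [c = |cos x|], so that [mu(sin, x) = (s + |x| c) / s].
    On the bounded interval [|x| <= M], and since [s^2 + c^2 = 1], one has
    [|x| <= (M + 1) (s + |x| c)]; hence the relative ball of radius [1 / (C mu)]
    around [x], with [C = 4 (M + 1)], has absolute radius at most [s / 2].
    As [sin] and [cos] are 1-Lipschitz, on that ball [|sin y| >= s / 2] (so the
    ball stays between the same two zeros [k pi] of [sin]) and [|y|], [|cos y|]
    grow by at most [s / 2], which bounds [mu(sin, y)] by [C mu(sin, x)]. *)

From Stdlib Require Import Reals ZArith Lra Psatz.
From Coquelicot Require Import Coquelicot.
Open Scope R_scope.

Lemma Rabs_sub1_le_of_Rabs_ln (q e : R) :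
  0 < q -> Rabs (ln q) < e -> e <= 1 / 2 -> Rabs (q - 1) <= 2 * e.
Proof.
  intros Hq Hln He.
  assert (Hlow : 1 + ln q <= q).
  { rewrite <- (exp_ln q Hq) at 2. apply exp_ineq1_le. }
  assert (Hinv : 0 < / q) by (apply Rinv_0_lt_compat; lra).
  assert (Hup : 1 + ln (/ q) <= / q).
  { rewrite <- (exp_ln (/ q) Hinv) at 2. apply exp_ineq1_le. }
  rewrite ln_Rinv in Hup by lra.
  assert (q * / q = 1) by (field; lra).
  apply Rabs_def2 in Hln.
  apply Rabs_le; split; [lra|].
  destruct (Rle_or_lt q 1); [lra | nra].
Qed.

Lemma rel_dist_lt_Rabs_sub (x y e : R) :
  e <= 1 / 2 -> Rbar_lt (rel_dist y x) (Finite e) -> Rabs (y - x) <= 2 * e * Rabs x.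
Proof.
  intros He Hd. unfold rel_dist in Hd.
  destruct (Req_EM_T y 0) as [-> | Hy0].
  - destruct (Req_EM_T x 0) as [-> | Hx0]; [|contradiction].
    rewrite Rminus_0_r, !Rabs_R0. lra.
  - destruct (Rlt_dec 0 (y * x)) as [Hyx | _]; [|contradiction].
    assert (Hx0 : x <> 0) by (intros ->; lra).
    assert (Hq : 0 < y / x).
    { replace (y / x) with (y * x / (x * x)) by (field; auto).
      apply Rdiv_lt_0_compat; nra. }
    assert (Hln : Rabs (ln (y / x)) < e).
    { replace (x / y) with (/ (y / x)) in Hd by (field; auto).
      rewrite ln_Rinv, Rabs_Ropp in Hd by exact Hq. exact Hd. }
    replace (y - x) with (x * (y / x - 1)) by (field; auto).
    rewrite Rabs_mult.
    pose proof (Rabs_sub1_le_of_Rabs_ln _ _ Hq Hln He).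
    pose proof (Rabs_pos x). nra.
Qed.

Lemma kappa_finite_neq0 (f : R -> R) (x : R) :
  x <> 0 -> is_finite (kappa f x) -> f x <> 0.
Proof.
  unfold kappa. intros Hx0 Hfin Hf.
  destruct (Req_EM_T x 0); [contradiction|].
  destruct (Req_EM_T (f x) 0); [discriminate Hfin | contradiction].
Qed.

Lemma mu_0 (f : R -> R) : mu f 0 = Finite 1.
Proof.
  unfold mu, kappa. destruct (Req_EM_T 0 0); [|contradiction].
  simpl. f_equal. ring.
Qed.

Definition sin_cond (x : R) : R := 1 + Rabs x * Rabs (cos x) / Rabs (sin x).

Lemma mu_sin (x : R) : x <> 0 -> sin x <> 0 -> mu sin x = Finite (sin_cond x).
Proof.
  intros Hx Hs. unfold mu, kappa, sin_cond.
  destruct (Req_EM_T x 0); [contradiction|].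
  destruct (Req_EM_T (sin x) 0); [contradiction|].
  rewrite (is_derive_unique _ _ _ (is_derive_sin x)). reflexivity.
Qed.

Lemma sin_lipschitz (a b : R) : Rabs (sin b - sin a) <= Rabs (b - a).
Proof.
  destruct (MVT_abs sin cos a b) as [c [-> _]].
  { intros; apply derivable_pt_lim_sin. }
  assert (Rabs (cos c) <= 1) by (apply Rabs_le, COS_bound).
  pose proof (Rabs_pos (b - a)). nra.
Qed.

Lemma cos_lipschitz (a b : R) : Rabs (cos b - cos a) <= Rabs (b - a).
Proof.
  destruct (MVT_abs cos (fun x => - sin x) a b) as [c [-> _]].
  { intros; apply derivable_pt_lim_cos. }
  assert (Rabs (- sin c) <= 1) by (rewrite Rabs_Ropp; apply Rabs_le, SIN_bound).
  pose proof (Rabs_pos (b - a)). nra.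
Qed.

Lemma Rabs_sin_le_dist_root (x z : R) : sin z = 0 -> Rabs (sin x) <= Rabs (x - z).
Proof.
  intros Hz. pose proof (sin_lipschitz z x) as H.
  rewrite Hz, Rminus_0_r in H. exact H.
Qed.

Lemma between_pi_multiples_near (k1 k2 : Z) (x y : R) :
  IZR k1 * PI < x < IZR k2 * PI -> Rabs (y - x) < Rabs (sin x) ->
  IZR k1 * PI < y < IZR k2 * PI.
Proof.
  intros [Hx1 Hx2] Hyx.
  pose proof (Rabs_sin_le_dist_root x (IZR k1 * PI)
                (sin_eq_0_1 _ (ex_intro _ k1 eq_refl))) as H1.
  pose proof (Rabs_sin_le_dist_root x (IZR k2 * PI)
                (sin_eq_0_1 _ (ex_intro _ k2 eq_refl))) as H2.
  rewrite (Rabs_right (x - _)) in H1 by lra.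
  rewrite (Rabs_left (x - _)) in H2 by lra.
  apply Rabs_def2 in Hyx. lra.
Qed.

Lemma Rabs_le_between_pi_multiples (k1 k2 : Z) (x : R) :
  IZR k1 * PI < x < IZR k2 * PI -> Rabs x <= (Rabs (IZR k1) + Rabs (IZR k2)) * PI.
Proof.
  intros [Hx1 Hx2]. pose proof PI_RGT_0.
  pose proof (Rle_abs (IZR k2)). pose proof (Rle_abs (- IZR k1)).
  rewrite Rabs_Ropp in *.
  pose proof (Rabs_pos (IZR k1)). pose proof (Rabs_pos (IZR k2)).
  apply Rabs_le; split; nra.
Qed.

Section SinNearRegularPoint.

Variables M x : R.
Hypothesis HxM : Rabs x <= M.
Hypothesis Hsx : sin x <> 0.

Let s := Rabs (sin x).
Let c := Rabs (cos x).

Lemma Rabs_sin_pos : 0 < s.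
Proof. apply Rabs_pos_lt, Hsx. Qed.

Lemma sin_cond_mul_Rabs_sin : s * sin_cond x = s + Rabs x * c.
Proof. pose proof Rabs_sin_pos. unfold sin_cond. fold s c. field. lra. Qed.

Lemma sin_cond_ge1 : 1 <= sin_cond x.
Proof.
  pose proof Rabs_sin_pos. unfold sin_cond. fold s c.
  assert (0 <= Rabs x * c / s).
  { apply Rdiv_le_0_compat; [apply Rmult_le_pos; apply Rabs_pos | lra]. }
  lra.
Qed.

Lemma Rabs_sin2_cos2 : s * s + c * c = 1.
Proof.
  unfold s, c. rewrite <- !Rabs_mult, !Rabs_right.
  - pose proof (sin2_cos2 x). unfold Rsqr in *. lra.
  - apply Rle_ge, Rle_0_sqr.
  - apply Rle_ge, Rle_0_sqr.
Qed.

(** If [|x| <= 1] then [s + |x| c >= |x| (s^2 + c^2)], otherwise [s + |x| c >= s + c >= 1]. *)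
Lemma Rabs_le_sin_cond : Rabs x <= (M + 1) * (s * sin_cond x).
Proof.
  rewrite sin_cond_mul_Rabs_sin.
  pose proof Rabs_sin2_cos2. pose proof Rabs_sin_pos.
  assert (Hs1 : s <= 1) by (apply Rabs_le, SIN_bound).
  assert (Hc1 : c <= 1) by (apply Rabs_le, COS_bound).
  assert (Hc0 : 0 <= c) by apply Rabs_pos.
  pose proof (Rabs_pos x).
  destruct (Rle_or_lt (Rabs x) 1).
  - assert (0 <= s * (1 - Rabs x * s)) by (apply Rmult_le_pos; nra).
    assert (0 <= Rabs x * c * (1 - c)) by (apply Rmult_le_pos; nra).
    assert (Rabs x <= s + Rabs x * c) by nra.
    nra.
  - assert (1 <= s + c) by nra.
    assert (Rabs x * c >= c) by nra.
    nra.
Qed.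

Lemma rel_ball_sin_close (y : R) :
  Rbar_lt (rel_dist y x) (Finite (1 / (4 * (M + 1) * sin_cond x))) ->
  Rabs (y - x) <= s / 2.
Proof.
  intros Hd.
  pose proof Rabs_le_sin_cond. pose proof sin_cond_ge1. pose proof Rabs_sin_pos.
  assert (HM : 0 <= M) by (pose proof (Rabs_pos x); lra).
  assert (Hcond : 4 <= 4 * (M + 1) * sin_cond x) by nra.
  apply rel_dist_lt_Rabs_sub in Hd.
  2: { apply (Rmult_le_reg_l (4 * (M + 1) * sin_cond x)); [lra|].
       field_simplify; lra. }
  eapply Rle_trans; [exact Hd|].
  apply (Rmult_le_reg_l (4 * (M + 1) * sin_cond x)); [lra|].
  field_simplify; nra.
Qed.

Lemma sin_cond_near (y : R) :
  Rabs (y - x) <= s / 2 -> sin y <> 0 /\ sin_cond y <= 4 * (M + 1) * sin_cond x.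
Proof.
  intros Hyx.
  pose proof Rabs_sin_pos.
  assert (Hsy : s / 2 <= Rabs (sin y)).
  { pose proof (sin_lipschitz x y) as Hlip.
    pose proof (Rabs_triang_inv (sin x) (sin y)) as Htri.
    rewrite Rabs_minus_sym in Htri. fold s in Htri. lra. }
  assert (Hy : Rabs y <= Rabs x + s / 2).
  { pose proof (Rabs_triang_inv y x). lra. }
  assert (Hcy : Rabs (cos y) <= c + s / 2).
  { pose proof (cos_lipschitz x y) as Hlip.
    pose proof (Rabs_triang_inv (cos y) (cos x)) as Htri.
    fold c in Htri. lra. }
  split; [intros E; rewrite E, Rabs_R0 in Hsy; lra|].
  assert (Hs1 : s <= 1) by (apply Rabs_le, SIN_bound).
  assert (Hc1 : c <= 1) by (apply Rabs_le, COS_bound).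
  assert (Hc0 : 0 <= c) by apply Rabs_pos.
  pose proof (Rabs_pos x). pose proof (Rabs_pos y). pose proof (Rabs_pos (cos y)).
  set (P := (Rabs x + s / 2) * (c + s / 2)).
  assert (Hquot : Rabs y * Rabs (cos y) / Rabs (sin y) <= P / (s / 2)).
  { apply Rmult_le_compat.
    - apply Rmult_le_pos; apply Rabs_pos.
    - apply Rlt_le, Rinv_0_lt_compat. lra.
    - apply Rmult_le_compat; lra.
    - apply Rinv_le_contravar; lra. }
  assert (HP : s * (P / (s / 2)) = 2 * P) by (field; lra).
  assert (HPs : s + 2 * P <= 4 * (M + 1) * (s + Rabs x * c)).
  { unfold P.
    assert (HM : 0 <= M) by lra.
    assert (s * Rabs x <= s * M) by (apply Rmult_le_compat_l; lra).
    assert (s * c <= s) by nra.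
    assert (s * s <= s) by nra.
    assert (0 <= Rabs x * c) by (apply Rmult_le_pos; lra).
    assert (0 <= M * (Rabs x * c)) by (apply Rmult_le_pos; lra).
    assert (0 <= M * s) by (apply Rmult_le_pos; lra).
    nra. }
  apply (Rmult_le_reg_l s); [lra|].
  replace (s * (4 * (M + 1) * sin_cond x)) with (4 * (M + 1) * (s + Rabs x * c))
    by (rewrite <- sin_cond_mul_Rabs_sin; ring).
  unfold sin_cond at 1.
  assert (s * (Rabs y * Rabs (cos y) / Rabs (sin y)) <= s * (P / (s / 2)))
    by (apply Rmult_le_compat_l; lra).
  lra.
Qed.

End SinNearRegularPoint.

Theorem mainTheorem9 (k1 k2 : Z) (hk : (k1 < k2)%Z) :
  amenable sin (fun x => IZR k1 * PI < x < IZR k2 * PI).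
Proof.
  set (M := (Rabs (IZR k1) + Rabs (IZR k2)) * PI).
  assert (HM : 0 <= M).
  { pose proof PI_RGT_0. pose proof (Rabs_pos (IZR k1)). pose proof (Rabs_pos (IZR k2)).
    unfold M. nra. }
  exists (4 * (M + 1)). split; [lra|].
  intros x Hx Hfin y Hd.
  destruct (Req_EM_T x 0) as [-> | Hx0].
  - rewrite mu_0 in Hd |- *. simpl in Hd.
    apply rel_dist_lt_Rabs_sub in Hd; [|apply (Rmult_le_reg_l (4 * (M + 1))); field_simplify; lra].
    rewrite Rabs_R0, Rminus_0_r in Hd.
    assert (y = 0) as -> by (pose proof (Rabs_pos y); apply Rabs_eq_0; lra).
    rewrite mu_0. split; [exact Hx | simpl; lra].
  - pose proof (kappa_finite_neq0 sin x Hx0 Hfin) as Hsx.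
    pose proof (Rabs_le_between_pi_multiples k1 k2 x Hx) as HxM.
    rewrite (mu_sin x) in Hd |- * by assumption. simpl in Hd.
    pose proof (rel_ball_sin_close M x HxM Hsx y Hd) as Hyx.
    destruct (sin_cond_near M x HxM Hsx y Hyx) as [Hsy Hmu].
    assert (Hy0 : y <> 0) by (intros ->; apply Hsy, sin_0).
    split.
    + apply (between_pi_multiples_near k1 k2 x y Hx).
      pose proof (Rabs_sin_pos x Hsx). lra.
    + rewrite mu_sin by assumption. exact Hmu.
Qed.
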